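(* Let $\beta>0$ and let $V\in\mathbb R^{d\times d}$ be real symmetric with orthonormal eigenbasis $(e_k)$ and eigenvalues $(\lambda_k)$. Consider on $(\mathbb S^{d-1})^n$ the system \[ \dot x_i=F_i(x):=P^\perp_{x_i}\Big(\sum_{j=1}^n K_{ij}(x)Vx_j\Big),\qquad K_{ij}(x)=\frac{e^{\beta\langle x_i,Vx_j\rangle}}{\sum_{\ell=1}^n e^{\beta\langle x_i,Vx_\ell\rangle}}. \] Fix $p\in[d]$ and signs $s_1,\dots,s_n\in\{\pm1\}$, and let $x_i^*=s_ie_p$ (a pure-mode equilibrium). For tangent perturbations $x_i=(x_i^*+y_i)/\|x_i^*+y_i\|$ with $\langle y_i,x_i^*\rangle=0$, one has \[ F_i(x)=-\gamma_iy_i+\sum_{j=1}^nK_{ij}^*Vy_j+O(|y|^2),\qquad |y|:=\max_m\|y_m\|, \] so that the linearized tangent system is \[ \dot y_i=-\gamma_iy_i+\sum_{j=1}^nK_{ij}^*Vy_j,\quad i\in[n], \] where $K_{ij}^*:=K_{ij}(x^* )$ and $\gamma_i:=\lambda_ps_i\sum_{j=1}^nK_{ij}^*s_j$.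
   Context: $P^\perp_xy=y-\langle x,y\rangle x$ denotes the orthogonal projection onto $T_x\mathbb S^{d-1}$. *)

From HB Require Import structures.
From mathcomp Require Import all_boot all_order all_algebra.
From mathcomp Require Import all_classical all_reals all_analysis.
Set Implicit Arguments. Unset Strict Implicit. Unset Printing Implicit Defensive.
Import Order.TTheory GRing.Theory Num.Theory.
Local Open Scope ring_scope.

Section Defs.
Variables (R : realType) (d n : nat).

Definition dotv (u v : 'cV[R]_d) : R := \sum_(k < d) u k 0 * v k 0.
Definition vnorm (u : 'cV[R]_d) : R := Num.sqrt (dotv u u).

Definition Pperp (x y : 'cV[R]_d) : 'cV[R]_d := y - dotv x y *: x.

Definition Katt (beta : R) (V : 'M[R]_d) (x : 'I_n -> 'cV[R]_d) (i j : 'I_n) : R :=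
  expR (beta * dotv (x i) (V *m x j)) /
  \sum_(l < n) expR (beta * dotv (x i) (V *m x l)).

Definition Fvec (beta : R) (V : 'M[R]_d) (x : 'I_n -> 'cV[R]_d) (i : 'I_n) : 'cV[R]_d :=
  Pperp (x i) (\sum_(j < n) Katt beta V x i j *: (V *m x j)).

Definition ymax (y : 'I_n -> 'cV[R]_d) : R := \big[Num.max/0]_(m < n) vnorm (y m).

Definition normalize (u : 'cV[R]_d) : 'cV[R]_d := (vnorm u)^-1 *: u.
End Defs.

From HB Require Import structures.
From mathcomp Require Import all_boot all_order all_algebra.
From mathcomp Require Import all_classical all_reals all_analysis.
From mathcomp Require Import ring lra.
Import Order.TTheory GRing.Theory Num.Theory.
Local Open Scope ring_scope.
Set Implicit Arguments. Unset Strict Implicit.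

(* Since y_i is orthogonal to x*_i = s_i e_p, the perturbed point is
   x_i = a_i (x*_i + y_i) with a_i = (1 + |y_i|^2)^(-1/2) = 1 + O(|y|^2).
   Hence the logits <x_i, V x_j> = a_i a_j (lam_p s_i s_j + <y_i, V y_j>)
   differ from their values at x* by O(|y|^2), and so do the softmax weights
   K_ij. Writing F_i = w_i - <x_i, w_i> x_i with w_i = sum_j K_ij V x_j, and
   using <e_p, V y_j> = lam_p <e_p, y_j> = 0, every term beyond the linear ones
   carries a factor O(|y|^2). The bookkeeping is done with bounds
   |f| <= c r^k holding uniformly on the set {|y| <= 1}, which gives delta = 1. *)

Section Euclidean.
Variables (R : realType) (d : nat).
Implicit Types (u v w : 'cV[R]_d) (A : 'M[R]_d).

Lemma dotvC u v : dotv u v = dotv v u.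
Proof. by apply: eq_bigr => k _; rewrite mulrC. Qed.

Lemma dotvDr u v w : dotv u (v + w) = dotv u v + dotv u w.
Proof. by rewrite /dotv -big_split; apply: eq_bigr => k _; rewrite mxE mulrDr. Qed.

Lemma dotvDl u v w : dotv (v + w) u = dotv v u + dotv w u.
Proof. by rewrite dotvC dotvDr !(dotvC u). Qed.

Lemma dotvZr a u v : dotv u (a *: v) = a * dotv u v.
Proof. by rewrite /dotv mulr_sumr; apply: eq_bigr => k _; rewrite mxE mulrCA. Qed.

Lemma dotvZl a u v : dotv (a *: v) u = a * dotv v u.
Proof. by rewrite dotvC dotvZr dotvC. Qed.

Lemma dotvNr u v : dotv u (- v) = - dotv u v.
Proof. by rewrite -scaleN1r dotvZr mulN1r. Qed.

Lemma dotvNl u v : dotv (- v) u = - dotv v u.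
Proof. by rewrite dotvC dotvNr dotvC. Qed.

Lemma dotvBr u v w : dotv u (v - w) = dotv u v - dotv u w.
Proof. by rewrite dotvDr dotvNr. Qed.

Lemma dotv0r u : dotv u 0 = 0.
Proof. by rewrite /dotv big1 // => k _; rewrite mxE mulr0. Qed.

Lemma dotv_sumr (I : finType) u (F : I -> 'cV[R]_d) :
  dotv u (\sum_(j : I) F j) = \sum_(j : I) dotv u (F j).
Proof. by elim/big_rec2: _ => [|j x y _ <-]; rewrite ?dotv0r ?dotvDr. Qed.

Lemma dotv_mxE u v : dotv u v = (u^T *m v) 0 0.
Proof. by rewrite mxE; apply: eq_bigr => k _; rewrite mxE. Qed.

Lemma dotv_mulmx A u v : dotv u (A *m v) = dotv (A^T *m u) v.
Proof. by rewrite !dotv_mxE trmx_mul trmxK mulmxA. Qed.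

Lemma dotv_ge0 u : 0 <= dotv u u.
Proof. by apply: sumr_ge0 => k _; rewrite -expr2 sqr_ge0. Qed.

Lemma vnorm_ge0 u : 0 <= vnorm u.
Proof. exact: sqrtr_ge0. Qed.

Lemma vnorm_sqr u : vnorm u ^+ 2 = dotv u u.
Proof. by rewrite sqr_sqrtr // dotv_ge0. Qed.

Lemma vnorm0 : vnorm (0 : 'cV[R]_d) = 0.
Proof. by rewrite /vnorm dotv0r sqrtr0. Qed.

Lemma vnormZ a u : vnorm (a *: u) = `|a| * vnorm u.
Proof. by rewrite /vnorm dotvZl dotvZr mulrA -expr2 sqrtrM ?sqr_ge0 // sqrtr_sqr. Qed.

Lemma vnormN u : vnorm (- u) = vnorm u.
Proof. by rewrite -scaleN1r vnormZ normrN normr1 mul1r. Qed.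

Lemma vnorm_eq0_dotv u v : vnorm u = 0 -> dotv u v = 0.
Proof.
move=> u0; have uu0 : \sum_(k < d) u k 0 ^+ 2 = 0.
  transitivity (vnorm u ^+ 2); last by rewrite u0 expr2 mul0r.
  by rewrite vnorm_sqr; apply: eq_bigr => k _; rewrite expr2.
rewrite /dotv big1 // => k _.
have /eqP : u k 0 ^+ 2 = 0 by apply: (psumr_eq0P _ uu0) => // *; exact: sqr_ge0.
by rewrite sqrf_eq0 => /eqP ->; rewrite mul0r.
Qed.

Lemma normr_dotv_le u v : `|dotv u v| <= vnorm u * vnorm v.
Proof.
have [a0|a_neq0] := eqVneq (vnorm u) 0; first by rewrite vnorm_eq0_dotv // normr0 a0 mul0r.
have [b0|b_neq0] := eqVneq (vnorm v) 0.
  by rewrite dotvC vnorm_eq0_dotv // normr0 b0 mulr0.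
set a := vnorm u in a_neq0 *; set b := vnorm v in b_neq0 *.
have ab_gt0 : 0 < a * b by rewrite mulr_gt0 // lt0r ?a_neq0 ?b_neq0 ?vnorm_ge0.
have uu : dotv u u = a ^+ 2 by rewrite vnorm_sqr.
have vv : dotv v v = b ^+ 2 by rewrite vnorm_sqr.
(* expand [0 <= |b u -+ a v|^2] *)
have := dotv_ge0 (b *: u - a *: v); have := dotv_ge0 (b *: u + a *: v).
rewrite !(dotvDl, dotvDr, dotvNl, dotvNr, dotvZl, dotvZr) uu vv (dotvC v u) => h1 h2.
by rewrite ler_norml; apply/andP; split; nra.
Qed.

Lemma vnormD u v : vnorm (u + v) <= vnorm u + vnorm v.
Proof.
rewrite -ler_sqr ?nnegrE ?addr_ge0 ?vnorm_ge0 // sqrrD !vnorm_sqr.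
rewrite !(dotvDl, dotvDr) (dotvC v u).
have := normr_dotv_le u v; have := ler_norm (dotv u v); lra.
Qed.

Lemma vnorm_sum (I : finType) (F : I -> 'cV[R]_d) :
  vnorm (\sum_(j : I) F j) <= \sum_(j : I) vnorm (F j).
Proof.
elim/big_ind2: _ => [|x1 x2 y1 y2 h1 h2|//]; first by rewrite vnorm0.
exact: le_trans (vnormD _ _) (lerD h1 h2).
Qed.

Lemma vnorm_le_sum_norm u : vnorm u <= \sum_(k < d) `|u k 0|.
Proof.
rewrite -ler_sqr ?nnegrE ?vnorm_ge0 ?sumr_ge0 // vnorm_sqr /dotv.
suff [] : 0 <= \sum_(k < d) `|u k 0| /\
  \sum_(k < d) u k 0 * u k 0 <= (\sum_(k < d) `|u k 0|) ^+ 2 by [].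
elim/big_ind2: _ => [|x1 x2 y1 y2 [? ?] [? ?]|k _]; rewrite ?expr0n //.
- by split; nra.
- by rewrite real_normK ?num_real // expr2.
Qed.

Definition mxrow_norm A := \sum_(k < d) vnorm (row k A)^T.

Lemma vnorm_mulmx_le A u : vnorm (A *m u) <= mxrow_norm A * vnorm u.
Proof.
apply: le_trans (vnorm_le_sum_norm _) _; rewrite /mxrow_norm mulr_suml.
apply: ler_sum => k _; have -> : (A *m u) k 0 = dotv (row k A)^T u.
  by rewrite mxE; apply: eq_bigr => l _; rewrite !mxE.
exact: normr_dotv_le.
Qed.

End Euclidean.

Lemma normr_expRB1_le {R : realType} (h : R) : `|expR h - 1| <= `|h| * expR `|h|.
Proof.
have e1 := expR_ge1Dx h; have := expR_ge1Dx (- h); rewrite expRN => e2.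
have hpos := expR_gt0 h; have hinv : expR h * (expR h)^-1 = 1 by rewrite divff ?gt_eqF.
have E1 : 1 <= expR `|h| by rewrite -expR0 ler_expR.
have E2 : expR h <= expR `|h| by rewrite ler_expR ler_norm.
have := ler_norm h; have := ler_norm (- h); rewrite normrN => hn1 hn2.
have := normr_ge0 h; rewrite ler_norml; move=> h0; apply/andP; split; nra.
Qed.

Lemma expR_le_sum {R : realType} (I : finType) (f : I -> R) i :
  expR (f i) <= \sum_l expR (f l).
Proof. by rewrite (bigD1 i) //= lerDl sumr_ge0 // => l _; exact/ltW/expR_gt0. Qed.

Section PowO.
Variables (R : realType) (T : Type) (P : T -> Prop) (r : T -> R).
Hypotheses (r_ge0 : forall t, P t -> 0 <= r t) (r_le1 : forall t, P t -> r t <= 1).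
Implicit Types (f g : T -> R) (k : nat).

Definition powO k f := exists2 c, 0 <= c & forall t, P t -> `|f t| <= c * r t ^+ k.
Definition powOv d k (f : T -> 'cV[R]_d) := powO k (fun t => vnorm (f t)).

Lemma powO_le k f g : (forall t, P t -> `|g t| <= `|f t|) -> powO k f -> powO k g.
Proof. by move=> gf [c c0 hf]; exists c => // t Pt; exact: le_trans (gf t Pt) (hf t Pt). Qed.

Lemma eq_powO k f g : (forall t, P t -> f t = g t) -> powO k f -> powO k g.
Proof. by move=> fg; apply: powO_le => t Pt; rewrite fg. Qed.

Lemma powO_cst a : powO 0 (fun=> a).
Proof. by exists `|a| => // t _; rewrite expr0 mulr1. Qed.

Lemma powOD k f g : powO k f -> powO k g -> powO k (fun t => f t + g t).
Proof.
move=> [c1 c10 h1] [c2 c20 h2]; exists (c1 + c2) => [|t Pt]; first exact: addr_ge0.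
by rewrite mulrDl; apply: le_trans (ler_normD _ _) (lerD (h1 t Pt) (h2 t Pt)).
Qed.

Lemma powON k f : powO k f -> powO k (fun t => - f t).
Proof. by apply: powO_le => t _; rewrite normrN. Qed.

Lemma powOB k f g : powO k f -> powO k g -> powO k (fun t => f t - g t).
Proof. by move=> hf /powON; exact: powOD. Qed.

Lemma powOM k1 k2 f g : powO k1 f -> powO k2 g -> powO (k1 + k2) (fun t => f t * g t).
Proof.
move=> [c1 c10 h1] [c2 c20 h2]; exists (c1 * c2) => [|t Pt]; first exact: mulr_ge0.
by rewrite normrM exprD mulrACA; apply: ler_pM => //; [exact: h1 | exact: h2].
Qed.

Lemma powO_uniform (I : finType) k (f : I -> T -> R) : (forall i, powO k (f i)) ->
  exists2 c, 0 <= c & forall i t, P t -> `|f i t| <= c * r t ^+ k.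
Proof.
move=> hf; have /choice[c hc] : forall i, exists c, 0 <= c /\
    forall t, P t -> `|f i t| <= c * r t ^+ k.
  by move=> i; have [c ? ?] := hf i; exists c.
have c_ge0 i : 0 <= c i by case: (hc i).
exists (\sum_i c i) => [|i t Pt]; first exact: sumr_ge0.
apply: le_trans ((hc i).2 t Pt) _; rewrite ler_wpM2r ?exprn_ge0 ?r_ge0 //.
by rewrite (bigD1 i) //= lerDl sumr_ge0.
Qed.

Lemma powO_sum (I : finType) k (f : I -> T -> R) :
  (forall i, powO k (f i)) -> powO k (fun t => \sum_i f i t).
Proof.
move=> /powO_uniform[c c0 hc]; exists (c *+ #|I|) => [|t Pt]; first exact: mulrn_wge0.
apply: le_trans (ler_norm_sum _ _ _) _; rewrite mulrnAl -sumr_const.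
by apply: ler_sum => i _; exact: hc.
Qed.

Lemma powO_weaken k k' f : (k <= k')%N -> powO k' f -> powO k f.
Proof.
move=> kk' [c c0 hf]; exists c => // t Pt; apply: le_trans (hf t Pt) _.
by rewrite ler_wpM2l // ler_wiXn2l ?r_ge0 ?r_le1.
Qed.

Lemma powO_inv f : (exists2 m, 0 < m & forall t, P t -> m <= f t) ->
  powO 0 (fun t => (f t)^-1).
Proof.
move=> [m m0 hm]; exists m^-1 => [|t Pt]; first by rewrite invr_ge0 ltW.
have ft0 : 0 < f t := lt_le_trans m0 (hm t Pt).
by rewrite expr0 mulr1 ger0_norm ?invr_ge0 ?(ltW ft0) // lef_pV2 ?posrE // hm.
Qed.

Lemma powO_expR_lbound f : powO 0 f ->
  exists2 m, 0 < m & forall t, P t -> m <= expR (f t).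
Proof.
move=> [c c0 hf]; exists (expR (- c)) => [|t Pt]; first exact: expR_gt0.
by move: (hf t Pt); rewrite expr0 mulr1 ler_expR ler_norml => /andP[].
Qed.

Lemma powO_expRB k f a : powO k (fun t => f t - a) ->
  powO k (fun t => expR (f t) - expR a).
Proof.
move=> [c c0 hf]; exists (expR a * (c * expR c)) => [|t Pt].
  by rewrite !mulr_ge0 // ltW ?expR_gt0.
have -> : expR (f t) - expR a = expR a * (expR (f t - a) - 1).
  by rewrite mulrBr mulr1 -expRD addrCA subrr addr0.
have rk1 : r t ^+ k <= 1 by rewrite exprn_ile1 ?r_ge0 ?r_le1.
have rk0 : 0 <= r t ^+ k by rewrite exprn_ge0 ?r_ge0.
have hc : `|f t - a| <= c by apply: le_trans (hf t Pt) _; rewrite ler_piMr.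
rewrite normrM gtr0_norm ?expR_gt0 // -mulrA ler_pM2l ?expR_gt0 //.
apply: le_trans (normr_expRB1_le (f t - a)) _; rewrite mulrAC.
by apply: ler_pM; [exact: normr_ge0 | exact/ltW/expR_gt0 | exact: hf | rewrite ler_expR].
Qed.

Lemma powO_divB k f g (a b : R) : b != 0 ->
  (exists2 m, 0 < m & forall t, P t -> m <= g t) ->
  powO k (fun t => f t - a) -> powO k (fun t => g t - b) ->
  powO k (fun t => f t / g t - a / b).
Proof.
move=> b0 g_lb fa gb; have g0 t : P t -> g t != 0.
  by move=> Pt; case: g_lb => m m0 /(_ t Pt) /(lt_le_trans m0) /gt_eqF->.
have gV := powO_inv g_lb.
have hf : powO k (fun t => (g t)^-1 * (f t - a)) := powOM gV fa.
have hg : powO k (fun t => a / b * ((g t)^-1 * (g t - b))) :=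
  powOM (powO_cst (a / b)) (powOM gV gb).
by apply: eq_powO (powOB hf hg) => t Pt; field; rewrite b0 g0.
Qed.

Section Vectors.
Variable d : nat.
Implicit Types (u : 'cV[R]_d) (F G : T -> 'cV[R]_d).
Local Notation powOv := (@powOv d).

Lemma powOv_le k f G : (forall t, P t -> vnorm (G t) <= `|f t|) -> powO k f -> powOv k G.
Proof. by move=> Gf; apply: powO_le => t Pt; rewrite ger0_norm ?vnorm_ge0 ?Gf. Qed.

Lemma eq_powOv k F G : (forall t, P t -> F t = G t) -> powOv k F -> powOv k G.
Proof. by move=> FG; apply: eq_powO => t Pt; rewrite FG. Qed.

Lemma powOv_cst u : powOv 0 (fun=> u).
Proof. exact: powO_cst. Qed.

Lemma powOvD k F G : powOv k F -> powOv k G -> powOv k (fun t => F t + G t).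
Proof.
move=> hF hG; apply: powOv_le (powOD hF hG) => t _.
exact: le_trans (vnormD _ _) (ler_norm _).
Qed.

Lemma powOvB k F G : powOv k F -> powOv k G -> powOv k (fun t => F t - G t).
Proof.
move=> hF hG; apply: powOv_le (powOD hF hG) => t _.
by rewrite -(vnormN (G t)); exact: le_trans (vnormD _ _) (ler_norm _).
Qed.

Lemma powOvZ k1 k2 f G : powO k1 f -> powOv k2 G ->
  powOv (k1 + k2) (fun t => f t *: G t).
Proof.
move=> hf hG; apply: powOv_le (powOM hf hG) => t _.
by rewrite vnormZ normrM [`|vnorm _|]ger0_norm ?vnorm_ge0.
Qed.

Lemma powOv_mulmx k (A : 'M[R]_d) F : powOv k F -> powOv k (fun t => A *m F t).
Proof.
move=> hF; apply: powOv_le (powOM (powO_cst (mxrow_norm A)) hF) => t _.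
exact: le_trans (vnorm_mulmx_le _ _) (ler_norm _).
Qed.

Lemma powO_dotv k1 k2 F G : powOv k1 F -> powOv k2 G ->
  powO (k1 + k2) (fun t => dotv (F t) (G t)).
Proof.
move=> hF hG; apply: powO_le (powOM hF hG) => t _.
exact: le_trans (normr_dotv_le _ _) (ler_norm _).
Qed.

Lemma powOv_sum (I : finType) k (F : I -> T -> 'cV[R]_d) :
  (forall i, powOv k (F i)) -> powOv k (fun t => \sum_i F i t).
Proof.
move=> hF; apply: powOv_le (powO_sum hF) => t _.
exact: le_trans (vnorm_sum _) (ler_norm _).
Qed.

End Vectors.
End PowO.

Lemma ymax_ge0 {R : realType} d n (y : 'I_n -> 'cV[R]_d) : 0 <= ymax y.
Proof.
by rewrite /ymax; elim/big_ind: _ => // [a b a0 b0|m _]; rewrite ?le_max ?a0 ?vnorm_ge0.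
Qed.

Lemma vnorm_le_ymax {R : realType} d n (y : 'I_n -> 'cV[R]_d) m : vnorm (y m) <= ymax y.
Proof. exact: le_bigmax. Qed.

Lemma invr_hypot_bounds {R : realType} (N q : R) : 0 <= N -> N ^+ 2 = 1 + q ^+ 2 ->
  0 < N^-1 <= 1 /\ `|N^-1 - 1| <= q ^+ 2.
Proof.
move=> N0 NE; have N1 : 1 <= N.
  by rewrite -(ler_pXn2r (isT : (0 < 2)%N)) ?nnegrE // expr1n NE lerDl sqr_ge0.
have Ninv : N * N^-1 = 1 by rewrite divff // gt_eqF // (lt_le_trans ltr01 N1).
have Ninv0 : 0 < N^-1 by rewrite invr_gt0 (lt_le_trans ltr01 N1).
have q2 := sqr_ge0 q.
by split; [apply/andP; split => //; nra | rewrite ler_norml; apply/andP; split; nra].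
Qed.

Section PureModeLinearization.
Variables (R : realType) (d n : nat) (beta lam : R) (V : 'M[R]_d) (e : 'cV[R]_d)
  (s : 'I_n -> R).
Hypotheses (V_sym : V^T = V) (e_unit : dotv e e = 1) (Ve : V *m e = lam *: e)
  (s_sign : forall i, s i = 1 \/ s i = -1).
Implicit Types (y : 'I_n -> 'cV[R]_d) (i j m : 'I_n).

Definition xstar i := s i *: e.
Definition small_tangent y := (forall i, dotv (y i) (xstar i) = 0) /\ ymax y <= 1.
Definition xpert y m := normalize (xstar m + y m).
Definition inv_norm y m := (vnorm (xstar m + y m))^-1.

Local Notation O := (powO small_tangent (@ymax R d n)).
Local Notation Ov := (powOv small_tangent (@ymax R d n)).

Let ymax_ge0_on y : small_tangent y -> 0 <= ymax y.
Proof. by move=> _; exact: ymax_ge0. Qed.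

Let ymax_le1_on y : small_tangent y -> ymax y <= 1.
Proof. by case. Qed.

Local Notation weaken := (powO_weaken ymax_ge0_on ymax_le1_on).
Local Notation cstO := (powO_cst small_tangent (@ymax R d n)).
Local Notation cstOv := (powOv_cst small_tangent (@ymax R d n)).
Local Notation sumO := (powO_sum ymax_ge0_on).
Local Notation sumOv := (powOv_sum ymax_ge0_on).

Lemma sign_sqr i : s i * s i = 1.
Proof. by case: (s_sign i) => ->; rewrite ?mulr1 ?mulrNN ?mulr1. Qed.

Lemma dotv_e_V u : dotv e (V *m u) = lam * dotv e u.
Proof. by rewrite dotv_mulmx V_sym Ve dotvZl. Qed.

Lemma tangent_dotv y m : small_tangent y -> dotv (y m) e = 0.
Proof.
case=> /(_ m) + _; rewrite dotvZr => /eqP; rewrite mulf_eq0 => /orP[/eqP sm0|/eqP //].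
by move: (sign_sqr m); rewrite sm0 mul0r => /eqP; rewrite eq_sym oner_eq0.
Qed.

Lemma dotv_e_tangent y m : small_tangent y -> dotv e (y m) = 0.
Proof. by rewrite dotvC; exact: tangent_dotv. Qed.

Lemma inv_norm_bounds y m : small_tangent y ->
  0 < inv_norm y m <= 1 /\ `|inv_norm y m - 1| <= ymax y ^+ 2.
Proof.
move=> ty; have sq : vnorm (xstar m + y m) ^+ 2 = 1 + vnorm (y m) ^+ 2.
  rewrite !vnorm_sqr /xstar !(dotvDl, dotvDr, dotvZl, dotvZr) e_unit tangent_dotv //.
  by rewrite dotv_e_tangent // !mulr0 !addr0 mulr1 sign_sqr add0r.
have [a_bounds q_bound] := invr_hypot_bounds (vnorm_ge0 _) sq.
split=> //; apply: le_trans q_bound _.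
by rewrite ler_sqr ?nnegrE ?vnorm_ge0 ?ymax_ge0 ?vnorm_le_ymax.
Qed.

Lemma powOv_y m : Ov 1 (fun y => y m).
Proof. by exists 1 => // y _; rewrite expr1 mul1r ger0_norm ?vnorm_ge0 ?vnorm_le_ymax. Qed.

Lemma powO_inv_norm m : O 0 (fun y => inv_norm y m).
Proof.
exists 1 => // y ty; have [/andP[a0 a1] _] := inv_norm_bounds m ty.
by rewrite expr0 mul1r ger0_norm ?(ltW a0).
Qed.

Lemma powO_inv_normB1 m : O 2 (fun y => inv_norm y m - 1).
Proof. by exists 1 => // y ty; rewrite mul1r; case: (inv_norm_bounds m ty). Qed.

Lemma V_xstar j : V *m xstar j = (s j * lam) *: e.
Proof. by rewrite /xstar -scalemxAr Ve scalerA. Qed.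

Lemma V_xpert y j : V *m xpert y j = inv_norm y j *: ((s j * lam) *: e + V *m y j).
Proof. by rewrite /xpert /normalize -scalemxAr mulmxDr V_xstar. Qed.

Lemma powOv_xpert m : Ov 0 (fun y => xpert y m).
Proof.
exact: powOvZ (powO_inv_norm m) (powOvD (cstOv _) (weaken (isT : (0 <= 1)%N) (powOv_y m))).
Qed.

Definition zpert y i j := dotv (xpert y i) (V *m xpert y j).
Definition zstar i j := lam * s i * s j.

Lemma zstarE i j : dotv (xstar i) (V *m xstar j) = zstar i j.
Proof. by rewrite V_xstar /xstar dotvZl dotvZr e_unit /zstar; ring. Qed.

Lemma zpertE y i j : small_tangent y ->
  zpert y i j = inv_norm y i * inv_norm y j * (zstar i j + dotv (y i) (V *m y j)).
Proof.
move=> ty; rewrite /zpert V_xpert {1}/xpert /normalize -/(inv_norm y i) /xstar /zstar.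
rewrite !(dotvDl, dotvDr, dotvZl, dotvZr) e_unit dotv_e_V dotv_e_tangent // tangent_dotv //.
ring.
Qed.

Lemma powO_zpertB i j : O 2 (fun y => zpert y i j - zstar i j).
Proof.
apply: eq_powO (powOD (powOM (powOD (powOM (powO_inv_normB1 i) (powO_inv_norm j))
    (powO_inv_normB1 j)) (cstO (zstar i j)))
  (powOM (powOM (powO_inv_norm i) (powO_inv_norm j))
    (powO_dotv (powOv_y i) (powOv_mulmx V (powOv_y j))))) => y ty.
by rewrite zpertE //; ring.
Qed.

Lemma Katt_xstar i j :
  Katt beta V xstar i j = expR (beta * zstar i j) / \sum_l expR (beta * zstar i l).
Proof. by rewrite /Katt zstarE; under eq_bigr do rewrite zstarE. Qed.

Lemma powO_KattB i j : O 2 (fun y => Katt beta V (xpert y) i j - Katt beta V xstar i j).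
Proof.
have expB l : O 2 (fun y => expR (beta * zpert y i l) - expR (beta * zstar i l)).
  apply: (powO_expRB ymax_ge0_on ymax_le1_on (f := fun y => beta * zpert y i l)).
  by apply: eq_powO (powOM (cstO beta) (powO_zpertB i l)) => y _; rewrite mulrBr.
have zii : O 0 (fun y => zpert y i i).
  apply: eq_powO (fun y _ => subrK _ _) (powOD _ (cstO (zstar i i))).
  exact: weaken (isT : (0 <= 2)%N) (powO_zpertB i i).
have [m m0 hm] := powO_expR_lbound (powOM (cstO beta) zii).
have Z_lb : exists2 m, 0 < m & forall y, small_tangent y ->
    m <= \sum_l expR (beta * zpert y i l).
  by exists m => // y ty; exact: le_trans (hm y ty) (expR_le_sum _ i).
have Zstar_neq0 : \sum_l expR (beta * zstar i l) != 0.
  by rewrite gt_eqF // (lt_le_trans (expR_gt0 _) (expR_le_sum _ i)).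
have ZB : O 2 (fun y => \sum_l expR (beta * zpert y i l) - \sum_l expR (beta * zstar i l)).
  by apply: eq_powO (sumO expB) => y _; rewrite sumrB.
apply: eq_powO (powO_divB Zstar_neq0 Z_lb (expB j) ZB) => y _.
by rewrite Katt_xstar.
Qed.

Definition cstar i := \sum_j Katt beta V xstar i j * s j.
Definition Wlin y i := \sum_j Katt beta V xstar i j *: (V *m y j).
Definition wlin y i := (lam * cstar i) *: e + Wlin y i.
Definition wpert y i := \sum_j Katt beta V (xpert y) i j *: (V *m xpert y j).

Lemma wpertB y i : wpert y i - wlin y i = \sum_j
  ((Katt beta V (xpert y) i j * inv_norm y j - Katt beta V xstar i j) *:
   ((s j * lam) *: e + V *m y j)).
Proof.
rewrite /wpert /wlin /Wlin /cstar; under eq_bigr do rewrite V_xpert.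
apply/matrixP => k l; rewrite !mxE !summxE big_distrr /= big_distrl /= -big_split /= -sumrB.
by apply: eq_bigr => j _; rewrite !mxE; ring.
Qed.

Lemma powOv_Wlin i : Ov 1 (fun y => Wlin y i).
Proof. by apply: sumOv => j; exact: powOvZ (cstO _) (powOv_mulmx V (powOv_y j)). Qed.

Lemma powOv_wpertB i : Ov 2 (fun y => wpert y i - wlin y i).
Proof.
apply: eq_powOv (fun y _ => esym (wpertB y i)) _; apply: sumOv => j.
apply: (powOvZ (k1 := 2) (k2 := 0)); last first.
  exact: powOvD (cstOv _) (weaken (isT : (0 <= 1)%N) (powOv_mulmx V (powOv_y j))).
apply: eq_powO (powOD (powOM (powO_KattB i j) (powO_inv_norm j))
  (powOM (cstO (Katt beta V xstar i j)) (powO_inv_normB1 j))) => y _.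
ring.
Qed.

Lemma dotv_e_Wlin y i : small_tangent y -> dotv e (Wlin y i) = 0.
Proof.
move=> ty; rewrite /Wlin dotv_sumr big1 // => j _.
by rewrite dotvZr dotv_e_V dotv_e_tangent // !mulr0.
Qed.

Lemma dotv_xpert_wpertE y i : small_tangent y ->
  dotv (xpert y i) (wpert y i) - lam * cstar i * s i =
  (inv_norm y i - 1) * (lam * cstar i * s i) + inv_norm y i * dotv (y i) (Wlin y i)
  + dotv (xpert y i) (wpert y i - wlin y i).
Proof.
move=> ty; rewrite /xpert /normalize -/(inv_norm y i) /wlin /xstar.
rewrite !(dotvBr, dotvDl, dotvDr, dotvZl, dotvZr) e_unit dotv_e_Wlin // tangent_dotv //.
by ring.
Qed.

Lemma powO_dotv_xpert_wpertB i :
  O 2 (fun y => dotv (xpert y i) (wpert y i) - lam * cstar i * s i).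
Proof.
apply: eq_powO (fun y ty => esym (dotv_xpert_wpertE i ty)) _.
apply: powOD (powO_dotv (powOv_xpert i) (powOv_wpertB i)).
exact: powOD (powOM (powO_inv_normB1 i) (cstO _))
  (powOM (powO_inv_norm i) (powO_dotv (powOv_y i) (powOv_Wlin i))).
Qed.

Lemma FvecB y i :
  Fvec beta V (xpert y) i - (- (lam * s i * cstar i) *: y i + Wlin y i) =
  (wpert y i - wlin y i)
  - ((inv_norm y i - 1) * (lam * cstar i * s i)) *: (xstar i + y i)
  - (dotv (xpert y i) (wpert y i) - lam * cstar i * s i) *: xpert y i.
Proof.
rewrite /Fvec /Pperp -/(wpert y i); set D := dotv _ (wpert y i).
rewrite /wlin /xpert /normalize -/(inv_norm y i) /xstar.
by apply/matrixP => k l; rewrite !mxE; case: (s_sign i) => ->; ring.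
Qed.

Lemma powOv_FvecB i :
  Ov 2 (fun y => Fvec beta V (xpert y) i - (- (lam * s i * cstar i) *: y i + Wlin y i)).
Proof.
apply: eq_powOv (fun y _ => esym (FvecB y i)) _.
apply: powOvB (powOvZ (powO_dotv_xpert_wpertB i) (powOv_xpert i)).
apply: powOvB (powOv_wpertB i) (powOvZ (powOM (powO_inv_normB1 i) (cstO _)) _).
exact: powOvD (cstOv _) (weaken (isT : (0 <= 1)%N) (powOv_y i)).
Qed.

End PureModeLinearization.

Lemma dotv_col_orthogonal {R : realType} d (E : 'M[R]_d) p :
  E^T *m E = 1%:M -> dotv (col p E) (col p E) = 1.
Proof.
move=> /(congr1 (fun M : 'M[R]_d => M p p)); rewrite !mxE eqxx mulr1n => <-.
by apply: eq_bigr => k _; rewrite !mxE.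
Qed.

Unset Implicit Arguments. Set Strict Implicit.

Theorem lemmaA1 (R : realType) (d n : nat) (beta : R) (V : 'M[R]_d)
  (E : 'M[R]_d) (lam : 'I_d -> R) (p : 'I_d) (s : 'I_n -> R) :
  0 < beta ->
  V^T = V ->
  E^T *m E = 1%:M ->
  (forall k : 'I_d, V *m col k E = lam k *: col k E) ->
  (forall i, s i = 1 \/ s i = -1) ->
  let xs := fun i : 'I_n => s i *: col p E in
  let Ks := Katt beta V xs in
  let gam := fun i : 'I_n => lam p * s i * \sum_(j < n) Ks i j * s j in
  exists C delta : R, 0 < delta /\
    forall y : 'I_n -> 'cV[R]_d,
      (forall i, dotv (y i) (xs i) = 0) ->
      ymax y <= delta ->
      forall i : 'I_n,
        vnorm (Fvec beta V (fun m => normalize (xs m + y m)) i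
               - (- gam i *: y i + \sum_(j < n) Ks i j *: (V *m y j)))
        <= C * ymax y ^+ 2.
Proof.
move=> _ V_sym E_orth E_eig s_sign xs Ks gam.
have e_unit := dotv_col_orthogonal p E_orth.
have [C C0 hC] := powO_uniform (fun y _ => ymax_ge0 y)
  (powOv_FvecB beta V_sym e_unit (E_eig p) s_sign).
exists C, 1; split=> // y y_tangent y_le1 i.
by have := hC i y (conj y_tangent y_le1); rewrite ger0_norm ?vnorm_ge0.
Qed.
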